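(* Let $n\in\mathbb{Z}$, $y_0>0$, and define for $x\in\mathbb{R}$, $y>0$ \[ G(x,y)=\frac{1}{2\pi}\log\frac{x^2+(y+y_0)^2}{x^2+(y-y_0)^2},\qquad p_n(x,y)=\frac{1}{\pi}\,\frac{y}{(x-2\pi n)^2+y^2}. \] Then for all $x\in\mathbb{R}$ and $y>0$, \[ \lim_{y_0\to\infty}\frac{G(x,y)}{p_n(0,y_0)}=2y, \] and if $y_0\ge 2\pi|n|$, then \[ \frac{G(x,y)}{p_n(0,y_0)}\le y\,g(y/y_0),\qquad\text{where } g(t)=t^{-1}\log\bigl(1+4t(t-1)^{-2}\bigr). \]
   Context: $G$ is the Green function of the upper half-plane (for $-\tfrac12\Delta$) with pole at $(0,y_0)$; $p_n$ is the Poisson kernel of the upper half-plane with pole at $2\pi n$. *)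

From Stdlib Require Import Reals ZArith.
From Coquelicot Require Import Coquelicot.
Open Scope R_scope.

(* Green function of the upper half-plane (for -1/2 Delta) with pole at (0,y0). *)
Definition G (y0 x y : R) : R :=
  / (2 * PI) * ln ((x ^ 2 + (y + y0) ^ 2) / (x ^ 2 + (y - y0) ^ 2)).

Definition p (n : Z) (x y : R) : R :=
  / PI * (y / ((x - 2 * PI * IZR n) ^ 2 + y ^ 2)).

Definition g (t : R) : R := / t * ln (1 + 4 * t / (t - 1) ^ 2).

(** With [a = 2 pi n] and [D = x^2 + (y - y0)^2], the quotient [G / p_n(0, y0)]
    equals [K ln (1 + u)] with [K = (a^2 + y0^2) / (2 y0)] and [u = 4 y y0 / D].
    The elementary bounds [u / (1 + u) <= ln (1 + u) <= u] squeeze it between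
    [2 y (a^2 + y0^2) / (x^2 + (y0 + y)^2)] and [2 y (a^2 + y0^2) / D], both of which
    tend to [2 y]; for the bound, [|a| <= y0] gives [K <= y0], and dropping [x^2]
    from [D] enlarges [u] to the value appearing in [y g (y / y0)]. *)
From Stdlib Require Import Reals ZArith Lra Psatz.
From Coquelicot Require Import Coquelicot.
Open Scope R_scope.

Lemma ln_1p_le (u : R) : -1 < u -> ln (1 + u) <= u.
Proof.
  intro Hu. rewrite <- (ln_exp u) at 2.
  apply ln_le; [lra | apply exp_ineq1_le].
Qed.

Lemma div_1p_le_ln_1p (u : R) : -1 < u -> u / (1 + u) <= ln (1 + u).
Proof.
  intro Hu.
  assert (Hexp := exp_ineq1_le (- (u / (1 + u)))).
  replace (1 + - (u / (1 + u))) with (/ (1 + u)) in Hexp by (field; lra).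
  apply ln_le in Hexp; [| apply Rinv_0_lt_compat; lra].
  rewrite ln_exp, ln_Rinv in Hexp by lra. lra.
Qed.

Lemma G_div_p_eq (n : Z) (x y y0 : R) : y0 <> 0 -> y <> y0 ->
  G y0 x y / p n 0 y0 =
  ((2 * PI * IZR n) ^ 2 + y0 ^ 2) / (2 * y0) *
  ln (1 + 4 * y * y0 / (x ^ 2 + (y - y0) ^ 2)).
Proof.
  intros Hy0 Hne.
  assert (HPI := PI_RGT_0).
  assert (HD : 0 < x ^ 2 + (y - y0) ^ 2)
    by (assert (0 < (y - y0) ^ 2) by (apply pow2_gt_0; lra); nra).
  assert (Ha : 0 < (2 * PI * IZR n) ^ 2 + y0 ^ 2)
    by (assert (0 < y0 ^ 2) by (apply pow2_gt_0; lra); nra).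
  unfold G, p.
  replace ((x ^ 2 + (y + y0) ^ 2) / (x ^ 2 + (y - y0) ^ 2))
    with (1 + 4 * y * y0 / (x ^ 2 + (y - y0) ^ 2)) by (field; lra).
  field. repeat split; lra.
Qed.

Lemma G_div_p_bounds (n : Z) (x y y0 : R) : 0 < y -> 0 < y0 -> y <> y0 ->
  2 * y * (((2 * PI * IZR n) ^ 2 + y0 ^ 2) / (x ^ 2 + (y0 + y) ^ 2))
  <= G y0 x y / p n 0 y0 <=
  2 * y * (((2 * PI * IZR n) ^ 2 + y0 ^ 2) / (x ^ 2 + (y0 - y) ^ 2)).
Proof.
  intros Hy Hy0 Hne.
  rewrite G_div_p_eq by lra.
  set (a := 2 * PI * IZR n).
  set (D := x ^ 2 + (y - y0) ^ 2).
  assert (HD : 0 < D)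
    by (assert (0 < (y - y0) ^ 2) by (apply pow2_gt_0; lra); unfold D; nra).
  set (K := (a ^ 2 + y0 ^ 2) / (2 * y0)).
  set (u := 4 * y * y0 / D).
  assert (HK : 0 <= K)
    by (unfold K; apply Rmult_le_pos; [nra | apply Rlt_le, Rinv_0_lt_compat; lra]).
  assert (Hu : 0 <= u)
    by (unfold u; apply Rmult_le_pos; [nra | apply Rlt_le, Rinv_0_lt_compat; lra]).
  replace (2 * y * ((a ^ 2 + y0 ^ 2) / (x ^ 2 + (y0 + y) ^ 2))) with (K * (u / (1 + u)))
    by (unfold K, u, D in *; field; repeat split; nra).
  replace (2 * y * ((a ^ 2 + y0 ^ 2) / (x ^ 2 + (y0 - y) ^ 2))) with (K * u)
    by (unfold K, u, D in *; field; split; nra).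
  split; apply Rmult_le_compat_l; auto.
  - apply div_1p_le_ln_1p; lra.
  - apply ln_1p_le; lra.
Qed.

Lemma is_lim_comp_inv_p_infty (h : R -> R) : continuous h 0 ->
  is_lim (fun y0 => h (/ y0)) p_infty (h 0).
Proof.
  intro Hh. apply (is_lim_comp_continuous (fun y0 => / y0) h p_infty 0); auto.
  exact (is_lim_inv (fun y0 => y0) p_infty p_infty (is_lim_id p_infty) ltac:(discriminate)).
Qed.

Lemma is_lim_quadratic_ratio (a x c : R) :
  is_lim (fun y0 => (a ^ 2 + y0 ^ 2) / (x ^ 2 + (y0 + c) ^ 2)) p_infty 1.
Proof.
  set (h := fun t => (a ^ 2 * t ^ 2 + 1) / (x ^ 2 * t ^ 2 + (1 + c * t) ^ 2)).
  replace (Finite 1) with (Finite (h 0)) by (unfold h; f_equal; field).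
  apply (is_lim_ext_loc (fun y0 => h (/ y0))).
  - exists (Rabs c). intros y0 Hy0.
    assert (Hc : y0 + c <> 0) by (unfold Rabs in Hy0; destruct Rcase_abs; lra).
    assert (0 < (y0 + c) ^ 2) by (apply pow2_gt_0; exact Hc).
    assert (0 <= Rabs c) by apply Rabs_pos.
    unfold h. field. split; nra.
  - apply is_lim_comp_inv_p_infty, (@ex_derive_continuous R_AbsRing R_NormedModule).
    unfold h. auto_derive. intro Hden. ring_simplify in Hden. lra.
Qed.

Lemma is_lim_G_div_p (n : Z) (x y : R) : 0 < y ->
  is_lim (fun y0 => G y0 x y / p n 0 y0) p_infty (2 * y).
Proof.
  intro Hy.
  set (a := 2 * PI * IZR n).
  set (ratio := fun c y0 => 2 * y * ((a ^ 2 + y0 ^ 2) / (x ^ 2 + (y0 + c) ^ 2))).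
  assert (Hlim : forall c, is_lim (ratio c) p_infty (2 * y)).
  { intro c. replace (Finite (2 * y)) with (Rbar_mult (2 * y) 1)
      by (simpl; f_equal; ring).
    apply is_lim_scal_l, is_lim_quadratic_ratio. }
  apply (is_lim_le_le_loc (ratio y) (ratio (- y))); [| apply Hlim | apply Hlim].
  exists y. intros y0 Hy0.
  unfold ratio. replace ((y0 + - y) ^ 2) with ((y0 - y) ^ 2) by ring.
  apply G_div_p_bounds; lra.
Qed.

Lemma mul_g_div (y y0 : R) : y <> 0 -> y0 <> 0 -> y <> y0 ->
  y * g (y / y0) = y0 * ln (1 + 4 * y * y0 / (y - y0) ^ 2).
Proof.
  intros Hy Hy0 Hne. unfold g.
  replace (4 * (y / y0) / (y / y0 - 1) ^ 2) with (4 * y * y0 / (y - y0) ^ 2)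
    by (field; split; lra).
  field. split; lra.
Qed.

Lemma G_div_p_le (n : Z) (x y y0 : R) : 0 < y -> 0 < y0 -> y <> y0 ->
  2 * PI * IZR (Z.abs n) <= y0 ->
  G y0 x y / p n 0 y0 <= y * g (y / y0).
Proof.
  intros Hy Hy0 Hne Hn.
  rewrite G_div_p_eq, mul_g_div by lra.
  set (a := 2 * PI * IZR n).
  assert (Ha : a ^ 2 <= y0 ^ 2).
  { apply pow_maj_Rabs. unfold a.
    assert (HPI := PI_RGT_0).
    rewrite !Rabs_mult, (Rabs_right 2), (Rabs_right PI), <- abs_IZR; lra. }
  assert (HK : (a ^ 2 + y0 ^ 2) / (2 * y0) <= y0) by (apply Rle_div_l; nra).
  assert (Hs : 0 < (y - y0) ^ 2) by (apply pow2_gt_0; lra).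
  set (u := 4 * y * y0 / (x ^ 2 + (y - y0) ^ 2)).
  assert (Hu : 0 <= u)
    by (apply Rmult_le_pos; [nra | apply Rlt_le, Rinv_0_lt_compat; nra]).
  assert (Huw : u <= 4 * y * y0 / (y - y0) ^ 2)
    by (apply Rmult_le_compat_l; [nra | apply Rinv_le_contravar; nra]).
  apply Rmult_le_compat; [| | exact HK | apply ln_le; lra].
  - apply Rmult_le_pos; [nra | apply Rlt_le, Rinv_0_lt_compat; lra].
  - rewrite <- ln_1. apply ln_le; lra.
Qed.

Theorem lemma3p3 (n : Z) :
  (forall x y : R, 0 < y ->
     is_lim (fun y0 => G y0 x y / p n 0 y0) p_infty (2 * y)) /\
  (forall x y y0 : R, 0 < y -> 0 < y0 -> y <> y0 ->
     2 * PI * IZR (Z.abs n) <= y0 ->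
     G y0 x y / p n 0 y0 <= y * g (y / y0)).
Proof.
  split.
  - exact (is_lim_G_div_p n).
  - exact (G_div_p_le n).
Qed.
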